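(* Let $G=(V,E)$ be a finite simple graph (not necessarily claw-free) whose modular decomposition tree $T(G)$ has one of the following forms: (a) the root is prime and every child of the root is a leaf or a serial node; (b) the root is serial and each child is a leaf, a parallel node with two children, or a prime node, the children of the latter two being leaves or serial nodes; (c) the root is parallel and each child is a leaf or the root of a subtree of form (a) or (b). Then: (1) if $A$ is a prime node of $T(G)$ with maximal modular partition $P$ of its vertex set $V(A)$, and $\{\tilde x_0,\dots,\tilde x_3\}$ is a claw in $G[V(A)]/P$, then $\{x_0,\dots,x_3\}$ is a claw in $G$ for arbitrary representatives $x_i\in\tilde x_i$; (2) if $A$ is a prime node with partition $P$ that is a child of a serial node $B$, and $\{\tilde x_1,\tilde x_2,\tilde x_3\}$ is an independent set of $G[V(A)]/P$, then $\{x_0,\dots,x_3\}$ is a claw in $G$ for arbitrary representatives $x_i\in\tilde x_i$ and every vertex $x_0$ in the vertex set of another child of $B$. Moreover, every claw of $G$ arises in exactly one of the ways (1) or (2).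
   Context: A claw is an induced subgraph isomorphic to $K_{1,3}$. A module of $G$ is a set $M\subseteq V$ such that every vertex outside $M$ is adjacent either to all or none of $M$. A graph is prime if it has at least 4 vertices and only the modules $\emptyset$, singletons and the whole vertex set. Modular decomposition (Gallai): exactly one holds: (single) $G$ is one vertex; (parallel) $G$ is disconnected; (serial) the complement of $G$ is disconnected; (prime) $G$ and its complement are connected, $|V|\ge4$, and the maximal proper modules partition $V$ into $P$ (the maximal modular partition) with $G/P$ prime. The tree $T(G)$: single case a leaf labelled by the vertex; parallel case a root labelled ''parallel'' with children $T(G[C])$ for components $C$; serial case a root labelled ''serial'' with children $T(G[C])$ for components $C$ of the complement; prime case a root labelled ''prime'' with children $T(G[M])$, $M\in P$. Each node $A$ has an associated vertex set $V(A)$. For a partition $P$ of a vertex set into modules, the quotient graph has vertex set $P$, with $X,Y$ adjacent iff every vertex of $X$ is adjacent to every vertex of $Y$; $\tilde x$ denotes the part containing $x$. *)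

(* Finite simple graphs as symmetric irreflexive relations on a finType. *)
From mathcomp Require Import all_boot.
Set Implicit Arguments. Unset Strict Implicit. Unset Printing Implicit Defensive.

Section ModDecomp.
Variables (T : finType) (e : rel T).

Definition restr (S : {set T}) : rel T := fun a b => [&& a \in S, b \in S & e a b].
Definition coe : rel T := fun a b => (a != b) && ~~ e a b.

Definition connectedb (r : rel T) (S : {set T}) : bool :=
  [forall x in S, forall y in S, connect (fun a b => [&& a \in S, b \in S & r a b]) x y].
Definition components (r : rel T) (S : {set T}) : {set {set T}} :=
  [set [set y in S | connect (fun a b => [&& a \in S, b \in S & r a b]) x y] | x in S].

Definition is_module (S M : {set T}) : bool :=
  (M \subset S) &&
  [forall v in S :\: M, [forall m in M, e v m] || [forall m in M, ~~ e v m]].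
Definition max_proper_module (S M : {set T}) : bool :=
  [&& is_module S M, M != S &
      [forall M' : {set T}, (is_module S M' && (M \proper M')) ==> (M' == S)]].

Inductive kind := Single | Parallel | Serial | Prime.

Definition node_kind (S : {set T}) : kind :=
  if #|S| == 1 then Single
  else if ~~ connectedb e S then Parallel
  else if ~~ connectedb coe S then Serial
  else Prime.

Definition children (S : {set T}) : {set {set T}} :=
  match node_kind S with
  | Single => set0
  | Parallel => components e S
  | Serial => components coe S
  | Prime => [set M | max_proper_module S M]
  end.

(* the nodes of T(G), identified with their vertex sets V(A) *)
Inductive is_node : {set T} -> Prop :=
  | node_root : is_node [set: T]
  | node_child S C : is_node S -> C \in children S -> is_node C.

Definition qadj : rel {set T} :=
  fun X Y => (X != Y) && [forall x in X, forall y in Y, e x y].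

Definition clawb (U : eqType) (r : rel U) (x0 x1 x2 x3 : U) : bool :=
  [&& r x0 x1, r x0 x2, r x0 x3, ~~ r x1 x2, ~~ r x1 x3, ~~ r x2 x3 &
      uniq [:: x1; x2; x3]].

Definition leaf_or_serial (S : {set T}) : Prop :=
  node_kind S = Single \/
  (node_kind S = Serial /\ forall D, D \in children S -> node_kind D = Single).

Definition form_a (S : {set T}) : Prop :=
  node_kind S = Prime /\ forall C, C \in children S -> leaf_or_serial C.

Definition form_b (S : {set T}) : Prop :=
  node_kind S = Serial /\
  forall C, C \in children S ->
    node_kind C = Single \/
    (node_kind C = Parallel /\ #|children C| = 2 /\
       forall D, D \in children C -> leaf_or_serial D) \/
    (node_kind C = Prime /\ forall D, D \in children C -> leaf_or_serial D).

Definition form_c (S : {set T}) : Prop :=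
  node_kind S = Parallel /\
  forall C, C \in children S -> node_kind C = Single \/ form_a C \/ form_b C.

Definition way1 (x0 x1 x2 x3 : T) : Prop :=
  exists A, exists X0 X1 X2 X3,
    [/\ is_node A, node_kind A = Prime,
        [/\ X0 \in children A, X1 \in children A, X2 \in children A & X3 \in children A],
        clawb qadj X0 X1 X2 X3 &
        [/\ x0 \in X0, x1 \in X1, x2 \in X2 & x3 \in X3]].

Definition way2 (x0 x1 x2 x3 : T) : Prop :=
  exists B A C, exists X1 X2 X3,
    [/\ [/\ is_node B, node_kind B = Serial, A \in children B & node_kind A = Prime],
        [/\ X1 \in children A, X2 \in children A & X3 \in children A],
        [&& ~~ qadj X1 X2, ~~ qadj X1 X3, ~~ qadj X2 X3 & uniq [:: X1; X2; X3]],
        [/\ x1 \in X1, x2 \in X2 & x3 \in X3] &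
        [/\ C \in children B, C != A & x0 \in C]].

End ModDecomp.

From mathcomp Require Import all_boot.
Set Implicit Arguments. Unset Strict Implicit. Unset Printing Implicit Defensive.

(* Children of a prime node are modules, so between two distinct children the
   adjacency of any representatives is the quotient adjacency; children of a
   serial node are completely joined to each other.
   The nodes of T(G) form a laminar family in which a node meeting a child of
   another node lies inside that child; a prime node realising way (1) and a
   serial node realising way (2) would have to be nested, and either nesting
   puts two of the vertices x0, x1, x2 into a common child where they must be
   separated.  For existence, the shapes (a)-(c) make every child of a prime
   node, and of a parallel node with two children, a clique.  Hence a claw lies
   in one component of a parallel root, and its three pairwise non-adjacent
   leaves lie in one co-component C of a serial node; C cannot be a leaf or a
   parallel node with two clique children, so it is prime.  If the centre is in
   C as well, the four vertices lie in distinct children of C (the leaves by the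
   clique property, the centre by the module property), giving way (1);
   otherwise they give way (2). *)

Lemma uniq3E (U : eqType) (a b c : U) :
  uniq [:: a; b; c] = [&& a != b, a != c & b != c].
Proof. by rewrite /= !inE negb_or andbT andbA. Qed.

Definition triangle (U : Type) (r : rel U) a b c := [&& r a b, r a c & r b c].

Lemma independent3E (U : finType) (r : rel U) a b c :
  [&& ~~ r a b, ~~ r a c, ~~ r b c & uniq [:: a; b; c]] = triangle (coe r) a b c.
Proof.
rewrite uniq3E /triangle /coe.
by case: (a == b); case: (a == c); case: (b == c); rewrite ?andbF ?andbT.
Qed.

Lemma clawbE (U : finType) (r : rel U) x0 x1 x2 x3 :
  clawb r x0 x1 x2 x3 =
  [&& r x0 x1, r x0 x2, r x0 x3 & triangle (coe r) x1 x2 x3].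
Proof. by rewrite /clawb -independent3E. Qed.

Section Components.
Variables (T : finType) (r : rel T).
Implicit Types (S M C : {set T}) (x y : T).

Lemma componentsP S C : C \in components r S ->
  exists2 c, c \in S & C = [set y in S | connect (restr r S) c y].
Proof. by case/imsetP => c cS ->; exists c. Qed.

Lemma components_sub S C : C \in components r S -> C \subset S.
Proof. by case/componentsP => c _ ->; apply/subsetP => y; rewrite inE => /andP[]. Qed.

Lemma components_cover S x : x \in S ->
  exists2 C, C \in components r S & x \in C.
Proof.
move=> xS; exists [set y in S | connect (restr r S) x y]; first exact: imset_f.
by rewrite inE xS connect0.
Qed.

Lemma component_closed S C x y : C \in components r S ->
  x \in C -> y \in S -> r x y -> y \in C.
Proof.
case/componentsP => c _ ->; rewrite !inE => /andP[xS cx] yS rxy.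
by rewrite yS (connect_trans cx) // connect1 // /restr xS yS.
Qed.

Lemma cut_not_connectedb S M x y : x \in S -> y \in S -> x \in M -> y \notin M ->
  (forall a b, a \in S -> b \in S -> a \in M -> b \notin M -> ~~ r a b) ->
  ~~ connectedb r S.
Proof.
move=> xS yS xM yM cut; apply/negP => /forall_inP/(_ x xS)/forall_inP/(_ y yS).
case/connectP => p; elim: p x xS xM => [|z p IHp] x xS xM /=.
  by move=> _ yx; move: yM; rewrite yx xM.
case/andP => /and3P[_ zS rxz] xp yp.
apply: (IHp z zS _ xp yp); apply: contraTT rxz => zM; exact: cut x z xS zS xM zM.
Qed.

Hypothesis r_sym : symmetric r.

Lemma components_disjoint S C1 C2 x : C1 \in components r S ->
  C2 \in components r S -> x \in C1 -> x \in C2 -> C1 = C2.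
Proof.
move=> /componentsP[c1 _ ->] /componentsP[c2 _ ->].
rewrite !inE => /andP[_ c1x] /andP[_ c2x].
have rS_sym : connect_sym (restr r S).
  by apply: sym_connect_sym => a b; rewrite /restr r_sym andbCA.
have c12 : connect (restr r S) c1 c2 by rewrite (connect_trans c1x) // rS_sym.
by apply/setP => y; rewrite !inE (same_connect rS_sym c12).
Qed.

Lemma components_nonadj S C1 C2 x y : C1 \in components r S ->
  C2 \in components r S -> C1 != C2 -> x \in C1 -> y \in C2 -> ~~ r x y.
Proof.
move=> h1 h2 C12 xC yC; apply: contra C12 => rxy.
have yS := subsetP (components_sub h2) y yC.
by rewrite (components_disjoint h1 h2 (component_closed h1 xC yS rxy) yC).
Qed.

End Components.

Section ModularDecomposition.
Variables (T : finType) (e : rel T).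
Hypothesis e_sym : symmetric e.
Implicit Types (S M N P Q A B C D X Y Z : {set T}) (x y z a b v : T).

Lemma coe_sym : symmetric (coe e).
Proof. by move=> a b; rewrite /coe eq_sym e_sym. Qed.

Lemma serial_components_adj S C1 C2 x y : C1 \in components (coe e) S ->
  C2 \in components (coe e) S -> C1 != C2 -> x \in C1 -> y \in C2 -> e x y.
Proof.
move=> h1 h2 C12 xC yC.
have xy : x != y.
  apply: contraNneq C12 => xy; rewrite xy in xC.
  by rewrite (components_disjoint coe_sym h1 h2 xC yC).
by have := components_nonadj coe_sym h1 h2 C12 xC yC; rewrite /coe xy negbK.
Qed.

Lemma node_kind_single S x y : node_kind e S = Single -> x \in S -> y \in S -> x = y.
Proof.
rewrite /node_kind; case: eqP => [/eqP/cards1P[z ->] _ | _].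
  by rewrite !inE => /eqP -> /eqP ->.
by case: ifP => //; case: ifP.
Qed.

Lemma node_kind_prime S : node_kind e S = Prime ->
  [/\ #|S| != 1, connectedb e S & connectedb (coe e) S].
Proof.
rewrite /node_kind; case: eqP => // /eqP S1.
by case: ifP => // /negbFE conn; case: ifP => // /negbFE coconn.
Qed.

Lemma children_parallel S : node_kind e S = Parallel -> children e S = components e S.
Proof. by rewrite /children => ->. Qed.

Lemma children_serial S : node_kind e S = Serial -> children e S = components (coe e) S.
Proof. by rewrite /children => ->. Qed.

Lemma children_prime S : node_kind e S = Prime ->
  children e S = [set M | max_proper_module e S M].
Proof. by rewrite /children => ->. Qed.

Lemma module_sub S M : is_module e S M -> M \subset S.
Proof. by case/andP. Qed.

Lemma module_adj_uniform S M v a b : is_module e S M -> v \in S -> v \notin M ->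
  a \in M -> b \in M -> e v a = e v b.
Proof.
case/andP => _ /forall_inP hM vS vM aM bM.
have /hM/orP[] : v \in S :\: M by rewrite inE vM vS.
  by move/forall_inP=> all_adj; rewrite !all_adj.
by move/forall_inP=> no_adj; rewrite (negbTE (no_adj a aM)) (negbTE (no_adj b bM)).
Qed.

Lemma set1_module S x : x \in S -> is_module e S [set x].
Proof.
move=> xS; rewrite /is_module sub1set xS; apply/forall_inP => v _.
by case: (boolP (e v x)) => vx; apply/orP; [left|right];
  apply/forall_inP => m /set1P ->.
Qed.

Lemma setU_module S M1 M2 x : is_module e S M1 -> is_module e S M2 ->
  x \in M1 -> x \in M2 -> is_module e S (M1 :|: M2).
Proof.
move=> m1 m2 x1 x2; rewrite /is_module subUset !module_sub //=.
apply/forall_inP => v; rewrite !inE negb_or => /andP[/andP[vM1 vM2] vS].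
have adj m : m \in M1 :|: M2 -> e v m = e v x.
  by case/setUP => mM; [apply: (module_adj_uniform m1) | apply: (module_adj_uniform m2)].
by case: (boolP (e v x)) => vx; apply/orP; [left|right];
  apply/forall_inP => m /adj ->.
Qed.

Lemma max_proper_module_max S M M' : max_proper_module e S M ->
  is_module e S M' -> M \proper M' -> M' = S.
Proof.
by case/and3P => _ _ /forallP/(_ M') maxM mM' MM'; apply/eqP; rewrite mM' MM' in maxM.
Qed.

Lemma prime_no_homogeneous_cut S M x y (c : bool) : node_kind e S = Prime ->
  x \in S -> y \in S -> x \in M -> y \notin M ->
  (forall a b, a \in S -> b \in S -> a \in M -> b \notin M -> e a b = c) -> False.
Proof.
case/node_kind_prime => _ conn coconn xS yS xM yM hom.
case: c hom => hom.
  move: coconn; apply/negP; apply: (cut_not_connectedb xS yS xM yM).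
  by move=> a b aS bS aM bM; rewrite /coe hom // andbF.
move: conn; apply/negP; apply: (cut_not_connectedb xS yS xM yM).
by move=> a b aS bS aM bM; rewrite hom.
Qed.

(* If neither module contains the other, their union is a module strictly larger
   than [M1], hence all of [S]; then [S :\: M1] lies in [M2], so through
   [a \in M1 :\: M2] and [x \in M1 :&: M2] the module [M1] is uniformly joined
   or uniformly non-joined to the rest of [S], which primality forbids. *)
Lemma max_proper_modules_disjoint S M1 M2 x : node_kind e S = Prime ->
  max_proper_module e S M1 -> max_proper_module e S M2 ->
  x \in M1 -> x \in M2 -> M1 = M2.
Proof.
move=> kS p1 p2 x1 x2; have [m1 nS1 _] := and3P p1; have [m2 nS2 _] := and3P p2.
have nested M M' : max_proper_module e S M -> is_module e S M' -> M' != S ->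
    M \subset M' -> M = M'.
  move=> pM mM' nM' sMM'; apply/eqP; apply: contraNT nM' => nMM'.
  by apply/eqP; apply: max_proper_module_max pM mM' _; rewrite properEneq nMM'.
have [|/subsetPn[a aM1 aM2]] := boolP (M1 \subset M2); first exact: nested.
have [|/subsetPn[b bM2 bM1]] := boolP (M2 \subset M1).
  by move/(nested _ _ p2 m1 nS1).
have cover : M1 :|: M2 = S.
  apply: max_proper_module_max p1 (setU_module m1 m2 x1 x2) _.
  by rewrite properE subsetUl; apply/subsetPn; exists b; rewrite ?inE ?bM2 ?orbT.
have inS := subsetP (module_sub m1); have bS : b \in S by rewrite -cover inE bM2 orbT.
exfalso; apply: (prime_no_homogeneous_cut kS (inS x x1) bS x1 bM1 (c := e a x)).
move=> z w zS wS zM1 wM1.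
have wM2 : w \in M2 by move: wS; rewrite -cover inE (negbTE wM1).
rewrite e_sym (module_adj_uniform m1 wS wM1 zM1 aM1) e_sym.
exact: (module_adj_uniform m2 (inS a aM1) aM2 wM2 x2).
Qed.

Lemma prime_children_cover S x : node_kind e S = Prime -> x \in S ->
  exists2 X, X \in children e S & x \in X.
Proof.
move=> kS xS; have [S1 _ _] := node_kind_prime kS.
pose P M := [&& is_module e S M, x \in M & M != S].
have Px : P [set x].
  by rewrite /P set1_module // set11; apply: contraNneq S1 => <-; rewrite cards1.
have [M /and3P[mM xM nMS] maxM] := arg_maxnP (fun M => #|M|) Px.
exists M => //; rewrite children_prime // inE /max_proper_module mM nMS.
apply/forallP => M'; apply/implyP => /andP[mM' MM']; apply: contraT => nM'S.
have := maxM M'; rewrite /P mM' nM'S (subsetP (proper_sub MM') x xM).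
by move/(_ isT); rewrite /= leqNgt proper_card.
Qed.

Lemma children_sub S D : D \in children e S -> D \subset S.
Proof.
rewrite /children; case: (node_kind e S); rewrite ?inE //; try exact: components_sub.
by case/and3P => /module_sub.
Qed.

Lemma children_disjoint S D1 D2 x : D1 \in children e S -> D2 \in children e S ->
  x \in D1 -> x \in D2 -> D1 = D2.
Proof.
rewrite /children; case kS: (node_kind e S); rewrite ?inE // => h1 h2.
- exact: (components_disjoint e_sym h1 h2).
- exact: (components_disjoint coe_sym h1 h2).
- exact: (max_proper_modules_disjoint kS h1 h2).
Qed.

Lemma children_neq_mem S X Y x y : X \in children e S -> Y \in children e S ->
  X != Y -> x \in X -> y \in Y -> x != y.
Proof.
move=> hX hY XY xX yY; apply: contraNneq XY => xy.
by rewrite xy in xX; rewrite (children_disjoint hX hY xX yY).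
Qed.

Lemma children_nonempty S D : D \in children e S -> exists x, x \in D.
Proof.
rewrite /children; case kS: (node_kind e S); rewrite ?inE //.
- by case/componentsP => c cS ->; exists c; rewrite inE cS connect0.
- by case/componentsP => c cS ->; exists c; rewrite inE cS connect0.
move=> pD; have [S1 _ _] := node_kind_prime kS; have [_ nDS _] := and3P pD.
suff /set0Pn[y yD] : D != set0 by exists y.
apply: contraNneq S1 => D0; rewrite D0 in pD nDS.
have [S0|[y yS]] := set_0Vmem S; first by rewrite S0 eqxx in nDS.
have := max_proper_module_max pD (set1_module yS); rewrite proper0 => eqS.
by rewrite -eqS ?cards1 //; apply/set0Pn; exists y; rewrite set11.
Qed.

Lemma children_cover S x : node_kind e S <> Single -> x \in S ->
  exists2 X, X \in children e S & x \in X.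
Proof.
move=> nS xS; move: nS; rewrite /children.
case kS: (node_kind e S) => nS; first by case: nS.
- exact: components_cover.
- exact: components_cover.
- by have := prime_children_cover kS xS; rewrite /children kS.
Qed.

Definition tree_related N M : Prop :=
  [\/ M = N, exists2 D, D \in children e N & M \subset D,
      exists2 D, D \in children e M & N \subset D | forall x, x \in M -> x \notin N].

(* The hypothesis on [N] under which [tree_related N M] follows by induction on
   [M]; it is itself established by induction on [N]. *)
Definition below_children N : Prop := forall M, is_node e M -> N \subset M ->
  N = M \/ exists2 D, D \in children e M & N \subset D.

Lemma tree_related_of_below_children N : below_children N ->
  forall M, is_node e M -> tree_related N M.
Proof.
move=> belowN M; elim=> [|P {}M hP IHP MP].
  have [<-|[D hD ND]] := belowN _ (@node_root T e) (subsetT N); first exact: Or41.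
  by apply: Or43; exists D.
have sMP := subsetP (children_sub MP).
case: IHP => [<- | [D hD PD] | [D hD ND] | PN].
- by apply: Or42; exists M.
- by apply: Or42; exists D => //; apply: subset_trans (children_sub MP) PD.
- have [DM|DM] := eqVneq D M.
    rewrite DM in ND; have [<-|[D' hD' ND']] := belowN M (node_child hP MP) ND.
      exact: Or41.
    by apply: Or43; exists D'.
  apply: Or44 => x xM; apply: contraNN DM => xN.
  by rewrite (children_disjoint hD MP (subsetP ND x xN) xM).
- by apply: Or44 => x /sMP; apply: PN.
Qed.

Lemma nodes_tree_related N M : is_node e N -> is_node e M -> tree_related N M.
Proof.
move=> hN; move: M; elim: hN => [|Q {}N hQ IHQ NQ]; apply: tree_related_of_below_children.
  by move=> M _ TM; left; apply/eqP; rewrite eqEsubset TM subsetT.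
move=> M hM NM; have [x xN] := children_nonempty NQ.
case: (IHQ M hM) => [QM | [D hD MD] | [D hD QD] | MQ].
- by right; exists N; rewrite ?QM ?subxx.
- have xD := subsetP MD x (subsetP NM x xN).
  rewrite -(children_disjoint NQ hD xN xD) in MD.
  by left; apply/eqP; rewrite eqEsubset NM MD.
- by right; exists D => //; apply: subset_trans (children_sub NQ) QD.
- by have := MQ x (subsetP NM x xN); rewrite (subsetP (children_sub NQ)).
Qed.

Lemma way1_way2_exclusive x0 x1 x2 x3 : way1 e x0 x1 x2 x3 -> ~ way2 e x0 x1 x2 x3.
Proof.
case=> A1 [X0 [X1 [X2 [X3 [hA1 kA1 [h0 h1 h2 _] cl [i0 i1 i2 _]]]]]].
case=> B [A [C [Y1 [Y2 [Y3 [[hB kB AB kA] [g1 g2 _] _ [j1 j2 _] [CB CA x0C]]]]]]].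
move: cl; rewrite clawbE => /and4P[_ _ _ /and3P[/andP[X12 _] _ _]].
have inA1 := subsetP (children_sub h0); have inB := subsetP (children_sub AB).
have x1A := subsetP (children_sub g1) _ j1; have x2A := subsetP (children_sub g2) _ j2.
case: (nodes_tree_related hA1 hB) => [BA1 | [D hD BD] | [D hD A1D] | BA1].
- by rewrite BA1 kA1 in kB.
- have X1D := children_disjoint h1 hD i1 (subsetP BD _ (inB _ x1A)).
  have X2D := children_disjoint h2 hD i2 (subsetP BD _ (inB _ x2A)).
  by move: X12; rewrite X1D X2D eqxx.
- have DC := children_disjoint hD CB (subsetP A1D _ (inA1 _ i0)) x0C.
  rewrite DC in A1D; have x1A1 := subsetP (children_sub h1) _ i1.
  by move: CA; rewrite (children_disjoint CB AB (subsetP A1D _ x1A1) x1A) eqxx.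
- by move: (BA1 x0 (subsetP (children_sub CB) _ x0C)); rewrite inA1.
Qed.

Lemma children_adj_uniform A X Z x y z : node_kind e A = Prime ->
  X \in children e A -> Z \in children e A -> X != Z ->
  x \in X -> y \in X -> z \in Z -> e x z = e y z.
Proof.
move=> kA hX hZ XZ xX yX zZ.
have mX : is_module e A X by move: hX; rewrite children_prime // inE => /and3P[].
have zX : z \notin X.
  by apply: contraNN XZ => zX; rewrite (children_disjoint hX hZ zX zZ).
have zA := subsetP (children_sub hZ) z zZ.
by rewrite e_sym [e y z]e_sym (module_adj_uniform mX zA zX xX yX).
Qed.

Lemma qadj_children A X Y x y : node_kind e A = Prime ->
  X \in children e A -> Y \in children e A -> X != Y -> x \in X -> y \in Y ->
  qadj e X Y = e x y.
Proof.
move=> kA hX hY XY xX yY; rewrite /qadj XY /=.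
apply/forall_inP/idP => [/(_ x xX)/forall_inP/(_ y yY) // | xy a aX].
apply/forall_inP => b bY; rewrite (children_adj_uniform kA hX hY XY aX xX bY).
by rewrite e_sym (children_adj_uniform kA hY hX _ bY yY xX) 1?eq_sym // e_sym.
Qed.

Lemma adj_of_qadj_children A X Y x y : node_kind e A = Prime ->
  X \in children e A -> Y \in children e A -> x \in X -> y \in Y ->
  qadj e X Y -> e x y.
Proof.
move=> kA hX hY xX yY qXY.
by rewrite -(qadj_children kA hX hY _ xX yY) //; case/andP: qXY.
Qed.

Lemma coe_of_quotient_coe A X Y x y : node_kind e A = Prime ->
  X \in children e A -> Y \in children e A -> x \in X -> y \in Y ->
  coe (qadj e) X Y -> coe e x y.
Proof.
move=> kA hX hY xX yY /andP[XY nqXY].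
by rewrite /coe (children_neq_mem hX hY XY xX yY) -(qadj_children kA hX hY XY xX yY).
Qed.

Lemma coe_triangle_of_quotient A X1 X2 X3 x1 x2 x3 : node_kind e A = Prime ->
  X1 \in children e A -> X2 \in children e A -> X3 \in children e A ->
  x1 \in X1 -> x2 \in X2 -> x3 \in X3 ->
  triangle (coe (qadj e)) X1 X2 X3 -> triangle (coe e) x1 x2 x3.
Proof.
move=> kA h1 h2 h3 i1 i2 i3 /and3P[c12 c13 c23].
rewrite /triangle (coe_of_quotient_coe kA h1 h2 i1 i2 c12).
rewrite (coe_of_quotient_coe kA h1 h3 i1 i3 c13).
by rewrite (coe_of_quotient_coe kA h2 h3 i2 i3 c23).
Qed.

Lemma claw_of_quotient_claw A X0 X1 X2 X3 x0 x1 x2 x3 : node_kind e A = Prime ->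
  X0 \in children e A -> X1 \in children e A ->
  X2 \in children e A -> X3 \in children e A ->
  x0 \in X0 -> x1 \in X1 -> x2 \in X2 -> x3 \in X3 ->
  clawb (qadj e) X0 X1 X2 X3 -> clawb e x0 x1 x2 x3.
Proof.
move=> kA h0 h1 h2 h3 i0 i1 i2 i3; rewrite !clawbE => /and4P[q01 q02 q03 tri].
rewrite (adj_of_qadj_children kA h0 h1 i0 i1 q01).
rewrite (adj_of_qadj_children kA h0 h2 i0 i2 q02).
rewrite (adj_of_qadj_children kA h0 h3 i0 i3 q03).
exact: (coe_triangle_of_quotient kA h1 h2 h3).
Qed.

Lemma claw_of_serial_prime B A C X1 X2 X3 x0 x1 x2 x3 :
  node_kind e B = Serial -> A \in children e B -> node_kind e A = Prime ->
  X1 \in children e A -> X2 \in children e A -> X3 \in children e A ->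
  x1 \in X1 -> x2 \in X2 -> x3 \in X3 ->
  [&& ~~ qadj e X1 X2, ~~ qadj e X1 X3, ~~ qadj e X2 X3 & uniq [:: X1; X2; X3]] ->
  C \in children e B -> C != A -> x0 \in C -> clawb e x0 x1 x2 x3.
Proof.
move=> kB AB kA h1 h2 h3 i1 i2 i3; rewrite independent3E => tri.
rewrite children_serial // => CB CA x0C; rewrite children_serial // in AB.
have adj0 X x : X \in children e A -> x \in X -> e x0 x.
  move=> hX xX; apply: (serial_components_adj CB AB CA x0C).
  exact: subsetP (children_sub hX) x xX.
rewrite clawbE (adj0 X1) // (adj0 X2) // (adj0 X3) //.
exact: (coe_triangle_of_quotient kA h1 h2 h3).
Qed.

Lemma leaf_or_serial_adj D x y : leaf_or_serial e D ->
  x \in D -> y \in D -> x != y -> e x y.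
Proof.
case=> [kD | [kD leaves]] xD yD xy.
  by rewrite (node_kind_single kD xD yD) eqxx in xy.
have [Cx hCx xCx] := components_cover (coe e) xD.
have [Cy hCy yCy] := components_cover (coe e) yD.
have [CxCy|CxCy] := eqVneq Cx Cy; last first.
  exact: (serial_components_adj hCx hCy CxCy xCx yCy).
have CxD : Cx \in children e D by rewrite children_serial.
by rewrite -CxCy in yCy; rewrite (node_kind_single (leaves _ CxD) xCx yCy) eqxx in xy.
Qed.

Section LeafOrSerialChildren.
Variable S : {set T}.
Hypothesis leaf_or_serial_children : forall D, D \in children e S -> leaf_or_serial e D.

Lemma coe_children_neq X Y x y : X \in children e S -> Y \in children e S ->
  x \in X -> y \in Y -> coe e x y -> X != Y.
Proof.
move=> hX hY xX yY /andP[xy nexy]; apply: contraNneq nexy => XY.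
by rewrite -XY in yY; apply: (leaf_or_serial_adj (leaf_or_serial_children hX)).
Qed.

Lemma coe_triangle_children_card x1 x2 x3 : node_kind e S <> Single ->
  x1 \in S -> x2 \in S -> x3 \in S ->
  triangle (coe e) x1 x2 x3 -> 3 <= #|children e S|.
Proof.
move=> nS s1 s2 s3 /and3P[c12 c13 c23].
have [X1 h1 i1] := children_cover nS s1.
have [X2 h2 i2] := children_cover nS s2.
have [X3 h3 i3] := children_cover nS s3.
have n12 := coe_children_neq h1 h2 i1 i2 c12.
have n13 := coe_children_neq h1 h3 i1 i3 c13.
have n23 := coe_children_neq h2 h3 i2 i3 c23.
have <- : #|[set X1; X2; X3]| = 3.
  by rewrite setUC cardsU1 cards2 !inE negb_or n12 eq_sym n13 eq_sym n23.
apply: subset_leq_card; apply/subsetP => X; rewrite !inE -!orbA.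
by case/or3P => /eqP ->.
Qed.

Hypothesis S_prime : node_kind e S = Prime.

Lemma quotient_coe_of_coe X Y x y : X \in children e S -> Y \in children e S ->
  x \in X -> y \in Y -> coe e x y -> coe (qadj e) X Y.
Proof.
move=> hX hY xX yY cxy; have XY := coe_children_neq hX hY xX yY cxy.
by rewrite /coe XY (qadj_children S_prime hX hY XY xX yY); case/andP: cxy.
Qed.

Lemma quotient_triangle_of_coe X1 X2 X3 x1 x2 x3 :
  X1 \in children e S -> X2 \in children e S -> X3 \in children e S ->
  x1 \in X1 -> x2 \in X2 -> x3 \in X3 ->
  triangle (coe e) x1 x2 x3 -> triangle (coe (qadj e)) X1 X2 X3.
Proof.
move=> h1 h2 h3 i1 i2 i3 /and3P[c12 c13 c23].
rewrite /triangle (quotient_coe_of_coe h1 h2 i1 i2 c12).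
by rewrite (quotient_coe_of_coe h1 h3 i1 i3 c13) (quotient_coe_of_coe h2 h3 i2 i3 c23).
Qed.

Lemma separated_children_neq X Y Z x y z : X \in children e S -> Y \in children e S ->
  Z \in children e S -> Y != Z -> x \in X -> y \in Y -> z \in Z ->
  e x z -> ~~ e y z -> X != Y.
Proof.
move=> hX hY hZ YZ xX yY zZ xz nyz; apply: contraTneq xz => XY.
rewrite -XY in yY YZ.
by rewrite (children_adj_uniform S_prime hX hZ YZ xX yY zZ).
Qed.

Lemma way1_of_prime_claw x0 x1 x2 x3 : is_node e S ->
  x0 \in S -> x1 \in S -> x2 \in S -> x3 \in S ->
  clawb e x0 x1 x2 x3 -> way1 e x0 x1 x2 x3.
Proof.
move=> hS s0 s1 s2 s3; rewrite clawbE => /and4P[e01 e02 e03 tri].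
have [X0 h0 i0] := prime_children_cover S_prime s0.
have [X1 h1 i1] := prime_children_cover S_prime s1.
have [X2 h2 i2] := prime_children_cover S_prime s2.
have [X3 h3 i3] := prime_children_cover S_prime s3.
have qtri := quotient_triangle_of_coe h1 h2 h3 i1 i2 i3 tri.
case/and3P: (qtri) => /andP[n12 _] /andP[n13 _] _.
case/and3P: (tri) => /andP[_ ne12] /andP[_ ne13] _.
have n01 := separated_children_neq h0 h1 h2 n12 i0 i1 i2 e02 ne12.
have n02 : X0 != X2.
  by apply: (separated_children_neq h0 h2 h1 _ i0 i2 i1 e01); rewrite 1?eq_sym // e_sym.
have n03 : X0 != X3.
  by apply: (separated_children_neq h0 h3 h1 _ i0 i3 i1 e01); rewrite 1?eq_sym // e_sym.
exists S, X0, X1, X2, X3; split => //.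
rewrite clawbE (qadj_children S_prime h0 h1 n01 i0 i1).
rewrite (qadj_children S_prime h0 h2 n02 i0 i2) (qadj_children S_prime h0 h3 n03 i0 i3).
by rewrite e01 e02 e03 qtri.
Qed.

End LeafOrSerialChildren.

Lemma way_of_claw_form_b B x0 x1 x2 x3 : is_node e B -> form_b e B ->
  x0 \in B -> x1 \in B -> x2 \in B -> x3 \in B -> clawb e x0 x1 x2 x3 ->
  way1 e x0 x1 x2 x3 \/ way2 e x0 x1 x2 x3.
Proof.
move=> hB [kB shapeB] b0 b1 b2 b3 cl; move: (cl).
rewrite clawbE => /and4P[_ _ _ tri]; case/and3P: (tri) => c12 c13 _.
have [C CBc x1C] := components_cover (coe e) b1.
have CB : C \in children e B by rewrite children_serial.
have x2C := component_closed CBc x1C b2 c12.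
have x3C := component_closed CBc x1C b3 c13.
case: (shapeB C CB) => [kC | [[kC [C2 hC]] | [kC hC]]].
- by move: c12; rewrite /coe (node_kind_single kC x1C x2C) eqxx.
- have nS : node_kind e C <> Single by rewrite kC.
  by have := coe_triangle_children_card hC nS x1C x2C x3C tri; rewrite C2.
have [x0C|x0C] := boolP (x0 \in C).
  by left; apply: (way1_of_prime_claw hC kC (node_child hB CB) x0C x1C x2C x3C).
right; have [C0 C0Bc x0C0] := components_cover (coe e) b0.
have C0B : C0 \in children e B by rewrite children_serial.
have C0C : C0 != C by apply: contraNneq x0C => <-.
have [X1 h1 i1] := prime_children_cover kC x1C.
have [X2 h2 i2] := prime_children_cover kC x2C.
have [X3 h3 i3] := prime_children_cover kC x3C.
exists B, C, C0, X1, X2, X3; split => //.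
by rewrite independent3E (quotient_triangle_of_coe hC kC h1 h2 h3 i1 i2 i3).
Qed.

Hypothesis e_irr : irreflexive e.

Lemma way_of_claw x0 x1 x2 x3 :
  form_a e [set: T] \/ form_b e [set: T] \/ form_c e [set: T] ->
  clawb e x0 x1 x2 x3 -> way1 e x0 x1 x2 x3 \/ way2 e x0 x1 x2 x3.
Proof.
have root := @node_root T e.
case=> [[kT hT] | [fb | [kT shapeT]]] cl.
- by left; apply: (way1_of_prime_claw hT kT root _ _ _ _ cl); rewrite in_setT.
- by apply: (way_of_claw_form_b root fb _ _ _ _ cl); rewrite in_setT.
move: (cl); rewrite clawbE => /and4P[e01 e02 e03 _].
have [K KTc x0K] := components_cover e (in_setT x0).
have KT : K \in children e [set: T] by rewrite children_parallel.
have inK y : e x0 y -> y \in K by apply: component_closed KTc x0K (in_setT y).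
have [x1K x2K x3K] := And3 (inK _ e01) (inK _ e02) (inK _ e03).
have hK := node_child root KT.
case: (shapeT K KT) => [kK | [[kK hK'] | fb]].
- by move: e01; rewrite (node_kind_single kK x0K x1K) e_irr.
- by left; apply: (way1_of_prime_claw hK' kK hK x0K x1K x2K x3K).
- exact: (way_of_claw_form_b hK fb x0K x1K x2K x3K).
Qed.

End ModularDecomposition.

Theorem proposition5 (T : finType) (e : rel T)
  (e_sym : symmetric e) (e_irr : irreflexive e) (T_nonempty : 0 < #|T|)
  (shape : form_a e [set: T] \/ form_b e [set: T] \/ form_c e [set: T]) :
  (* (1) *)
  (forall A : {set T}, is_node e A -> node_kind e A = Prime ->
     forall X0 X1 X2 X3 : {set T},
       X0 \in children e A -> X1 \in children e A ->
       X2 \in children e A -> X3 \in children e A ->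
       clawb (qadj e) X0 X1 X2 X3 ->
       forall x0 x1 x2 x3 : T, x0 \in X0 -> x1 \in X1 -> x2 \in X2 -> x3 \in X3 ->
         clawb e x0 x1 x2 x3) /\
  (* (2) *)
  (forall B A : {set T}, is_node e B -> node_kind e B = Serial ->
     A \in children e B -> node_kind e A = Prime ->
     forall X1 X2 X3 : {set T},
       X1 \in children e A -> X2 \in children e A -> X3 \in children e A ->
       [&& ~~ qadj e X1 X2, ~~ qadj e X1 X3, ~~ qadj e X2 X3 & uniq [:: X1; X2; X3]] ->
       forall x1 x2 x3 : T, x1 \in X1 -> x2 \in X2 -> x3 \in X3 ->
       forall C : {set T}, C \in children e B -> C != A ->
       forall x0 : T, x0 \in C -> clawb e x0 x1 x2 x3) /\
  (* every claw arises in exactly one of the ways (1), (2) *)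
  (forall x0 x1 x2 x3 : T, clawb e x0 x1 x2 x3 ->
     (way1 e x0 x1 x2 x3 /\ ~ way2 e x0 x1 x2 x3) \/
     (way2 e x0 x1 x2 x3 /\ ~ way1 e x0 x1 x2 x3)).
Proof.
split; last split.
- move=> A _ kA X0 X1 X2 X3 h0 h1 h2 h3 cl x0 x1 x2 x3 i0 i1 i2 i3.
  exact: (claw_of_quotient_claw e_sym kA h0 h1 h2 h3 i0 i1 i2 i3 cl).
- move=> B A _ kB AB kA X1 X2 X3 h1 h2 h3 indep x1 x2 x3 i1 i2 i3 C CB CA x0 x0C.
  exact: (claw_of_serial_prime e_sym kB AB kA h1 h2 h3 i1 i2 i3 indep CB CA x0C).
move=> x0 x1 x2 x3 cl; have excl := @way1_way2_exclusive T e e_sym x0 x1 x2 x3.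
case: (way_of_claw e_sym e_irr shape cl) => w; [left | right].
  by split=> // w'; apply: excl w w'.
by split=> // w'; apply: excl w' w.
Qed.
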